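(* Let $\Gamma\subseteq\mathit{Aff}(2,\mathbb{H})$ be an abelian subgroup acting freely on $\mathbb{H}^2$. Then $\Gamma$ is conjugate in $\mathit{Aff}(2,\mathbb{H})$ either to a subgroup of the group of all matrices $\begin{pmatrix} 1&0&r\\ 0&d&0\\ 0&0&1\end{pmatrix}$ with $r,d\in\mathbb{H}$, $d\neq0$, or to a subgroup of the group of all matrices $\begin{pmatrix} 1&b&r\\ 0&1&s\\ 0&0&1\end{pmatrix}$ with $b,r,s\in\mathbb{H}$.
   Context: $\mathit{Aff}(2,\mathbb{H})$ is identified with invertible $3\times3$ quaternionic matrices $\begin{pmatrix} a&b&r\\ c&d&s\\ 0&0&1\end{pmatrix}$ acting on $(x,y)\in\mathbb{H}^2$ by $(x,y)\mapsto(ax+by+r,cx+dy+s)$. *)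

From HB Require Import structures.
From mathcomp Require Import all_boot all_order all_algebra.
From mathcomp Require Import reals.
Set Implicit Arguments. Unset Strict Implicit. Unset Printing Implicit Defensive.
Import Order.TTheory GRing.Theory Num.Theory.
Local Open Scope ring_scope.

Section Quat.
Variable R : realType.

(* Quaternions H = R + R i + R j + R k *)
Record quat := Quat { q0 : R; q1 : R; q2 : R; q3 : R }.

Definition qzero : quat := Quat 0 0 0 0.
Definition qone : quat := Quat 1 0 0 0.
Definition qadd (p q : quat) : quat :=
  Quat (q0 p + q0 q) (q1 p + q1 q) (q2 p + q2 q) (q3 p + q3 q).
(* Hamilton product, i^2 = j^2 = k^2 = ijk = -1 *)
Definition qmul (p q : quat) : quat :=
  Quat (q0 p * q0 q - q1 p * q1 q - q2 p * q2 q - q3 p * q3 q)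
       (q0 p * q1 q + q1 p * q0 q + q2 p * q3 q - q3 p * q2 q)
       (q0 p * q2 q - q1 p * q3 q + q2 p * q0 q + q3 p * q1 q)
       (q0 p * q3 q + q1 p * q2 q - q2 p * q1 q + q3 p * q0 q).

(* An element of Aff(2,H): the 3x3 quaternionic matrix
     ( a b r )
     ( c d s )
     ( 0 0 1 ) *)
Record aff := Aff { aa : quat; ab : quat; ac : quat; ad : quat;
                    ar : quat; as_ : quat }.

Definition aff1 : aff := Aff qone qzero qzero qone qzero qzero.

Definition aff_mul (g h : aff) : aff :=
  Aff (qadd (qmul (aa g) (aa h)) (qmul (ab g) (ac h)))
      (qadd (qmul (aa g) (ab h)) (qmul (ab g) (ad h)))
      (qadd (qmul (ac g) (aa h)) (qmul (ad g) (ac h)))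
      (qadd (qmul (ac g) (ab h)) (qmul (ad g) (ad h)))
      (qadd (qadd (qmul (aa g) (ar h)) (qmul (ab g) (as_ h))) (ar g))
      (qadd (qadd (qmul (ac g) (ar h)) (qmul (ad g) (as_ h))) (as_ g)).

Definition aff_invertible (g : aff) : Prop :=
  exists h, aff_mul g h = aff1 /\ aff_mul h g = aff1.

Definition aff_act (g : aff) (p : quat * quat) : quat * quat :=
  (qadd (qadd (qmul (aa g) p.1) (qmul (ab g) p.2)) (ar g),
   qadd (qadd (qmul (ac g) p.1) (qmul (ad g) p.2)) (as_ g)).

Definition is_subgroup (G : aff -> Prop) : Prop :=
  (forall g, G g -> aff_invertible g) /\
  G aff1 /\
  (forall g h, G g -> G h -> G (aff_mul g h)) /\
  (forall g, G g -> exists h, G h /\ aff_mul g h = aff1 /\ aff_mul h g = aff1).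

Definition is_abelian (G : aff -> Prop) : Prop :=
  forall g h, G g -> G h -> aff_mul g h = aff_mul h g.

Definition acts_freely (G : aff -> Prop) : Prop :=
  forall g p, G g -> aff_act g p = p -> g = aff1.

Definition typeI (g : aff) : Prop :=
  aa g = qone /\ ab g = qzero /\ ac g = qzero /\ ad g <> qzero /\ as_ g = qzero.

Definition typeII (g : aff) : Prop :=
  aa g = qone /\ ac g = qzero /\ ad g = qone.

Definition conj_into (G K : aff -> Prop) : Prop :=
  exists P Q, aff_mul P Q = aff1 /\ aff_mul Q P = aff1 /\
    forall g, G g -> K (aff_mul (aff_mul P g) Q).

End Quat.

From Pilot Require Import Defs.
From mathcomp Require Import all_boot all_order all_algebra reals ring lra.
From Stdlib Require Import Classical.
Set Implicit Arguments. Unset Strict Implicit. Unset Printing Implicit Defensive.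
Import GRing.Theory.
Local Open Scope ring_scope.

(* Suppose some g in Gamma has a non-trivial linear part L.  Being fixed-point
   free, g has L - 1 singular (a 2x2 quaternionic system is solvable unless its
   matrix has a kernel), so L fixes a nonzero vector; moving that vector to e1
   makes g upper triangular with a = 1.  Freeness also forbids an upper
   triangular element with both diagonal entries different from 1, since such
   an element has a fixed point.  If d = 1 then b <> 0, and commuting with g
   forces every element of Gamma to be unipotent upper triangular.  If d <> 1, a
   shear conjugates g to diag(1, d) plus a translation along e1, and commuting
   with it forces every element into the first group. *)

Section AffineQuaternionic.
Variable R : realType.
Local Notation quat := (quat R).
Local Notation aff := (aff R).
Local Notation qzero := (qzero R).
Local Notation qone := (qone R).
Local Notation aff1 := (aff1 R).

Definition qopp (p : quat) : quat := Quat (- q0 p) (- q1 p) (- q2 p) (- q3 p).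
Definition qsub (p q : quat) : quat := qadd p (qopp q).
Definition qnorm2 (p : quat) : R := q0 p ^+ 2 + q1 p ^+ 2 + q2 p ^+ 2 + q3 p ^+ 2.
Definition qinv (p : quat) : quat :=
  Quat (q0 p / qnorm2 p) (- q1 p / qnorm2 p) (- q2 p / qnorm2 p) (- q3 p / qnorm2 p).

Lemma quat_ext (p q : quat) :
  q0 p = q0 q -> q1 p = q1 q -> q2 p = q2 q -> q3 p = q3 q -> p = q.
Proof. by case: p; case: q => /= ? ? ? ? ? ? ? ? -> -> -> ->. Qed.

(* Componentwise check of identities in the noncommutative ring of quaternions;
   qinv is not unfolded, so cancellations need qmulrV and its relatives. *)
Ltac qring :=
  apply: quat_ext; cbv [qsub qopp qmul qadd Defs.qone Defs.qzero q0 q1 q2 q3 fst snd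
    aff_mul Defs.aff1 aa ab ac ad ar as_]; ring.

Lemma qone_neq0 : qone <> qzero.
Proof. by move/(congr1 (@q0 R)) => /= /eqP; rewrite oner_eq0. Qed.

Lemma qnorm2_neq0 (p : quat) : p <> qzero -> qnorm2 p != 0.
Proof.
move=> p0; apply/eqP; rewrite /qnorm2 => n0; apply: p0.
by apply: quat_ext => /=; nra.
Qed.

Lemma qmulA (p q r : quat) : qmul (qmul p q) r = qmul p (qmul q r).
Proof. qring. Qed.

Lemma qmulrV (p : quat) : p <> qzero -> qmul p (qinv p) = qone.
Proof.
move/qnorm2_neq0; case: p => a b c d n0.
by apply: quat_ext; rewrite /= /qnorm2 /= in n0 *; field.
Qed.

Lemma qmulVr (p : quat) : p <> qzero -> qmul (qinv p) p = qone.
Proof.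
move/qnorm2_neq0; case: p => a b c d n0.
by apply: quat_ext; rewrite /= /qnorm2 /= in n0 *; field.
Qed.

Lemma qmulKr (p q : quat) : p <> qzero -> qmul (qinv p) (qmul p q) = q.
Proof. by move=> p0; rewrite -qmulA qmulVr //; qring. Qed.

Lemma qmulVKr (p q : quat) : p <> qzero -> qmul p (qmul (qinv p) q) = q.
Proof. by move=> p0; rewrite -qmulA qmulrV //; qring. Qed.

Lemma qmulrK (p q : quat) : p <> qzero -> qmul (qmul q p) (qinv p) = q.
Proof. by move=> p0; rewrite qmulA qmulrV //; qring. Qed.

Lemma qmulrVK (p q : quat) : p <> qzero -> qmul (qmul q (qinv p)) p = q.
Proof. by move=> p0; rewrite qmulA qmulVr //; qring. Qed.

Lemma qmulfI (p q r : quat) : p <> qzero -> qmul p q = qmul p r -> q = r.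
Proof. by move=> p0 /(congr1 (qmul (qinv p))); rewrite !qmulKr. Qed.

Lemma qmulIf (p q r : quat) : p <> qzero -> qmul q p = qmul r p -> q = r.
Proof. by move=> p0 /(congr1 (fun x => qmul x (qinv p))); rewrite !qmulrK. Qed.

Lemma qsub_eq0 (p q : quat) : qsub p q = qzero -> p = q.
Proof.
move=> /[dup] /(congr1 (@q0 R)) /= e0 /[dup] /(congr1 (@q1 R)) /= e1
       /[dup] /(congr1 (@q2 R)) /= e2 /(congr1 (@q3 R)) /= e3.
apply: quat_ext; lra.
Qed.

Lemma eq_by_qsub (x y u v : quat) : x = y -> qsub u v = qsub x y -> u = v.
Proof. by move=> -> uv; apply: qsub_eq0; rewrite uv; qring. Qed.

Definition qlin (a b c d : quat) (x : quat * quat) : quat * quat :=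
  (qadd (qmul a x.1) (qmul b x.2), qadd (qmul c x.1) (qmul d x.2)).

Lemma qlin_solvable_or_singular_pivot (a b c d : quat) (t : quat * quat) :
  a <> qzero ->
  (exists x, qlin a b c d x = t) \/
  (exists2 x, x <> (qzero, qzero) & qlin a b c d x = (qzero, qzero)).
Proof.
case: t => t1 t2 a0.
case: (classic (qsub d (qmul c (qmul (qinv a) b)) = qzero)) => [schur0 | schur_neq0].
- right; exists (qopp (qmul (qinv a) b), qone).
    by move=> /(congr1 snd); exact: qone_neq0.
  rewrite /qlin /=; congr (_, _).
  + transitivity (qsub b (qmul a (qmul (qinv a) b))); first qring.
    by rewrite qmulVKr //; qring.
  + by rewrite -schur0; qring.
- left; set schur := qsub d _ in schur_neq0.
  set x2 := qmul (qinv schur) (qsub t2 (qmul c (qmul (qinv a) t1))).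
  exists (qmul (qinv a) (qsub t1 (qmul b x2)), x2); rewrite /qlin /=; congr (_, _).
  + by rewrite qmulVKr //; qring.
  + transitivity (qadd (qmul c (qmul (qinv a) t1)) (qmul schur x2)).
      by rewrite /schur; qring.
    by rewrite /x2 qmulVKr //; qring.
Qed.

Lemma qlin_solvable_or_singular (a b c d : quat) (t : quat * quat) :
  (exists x, qlin a b c d x = t) \/
  (exists2 x, x <> (qzero, qzero) & qlin a b c d x = (qzero, qzero)).
Proof.
case: (classic (a = qzero)) => [a0 | ]; last exact: qlin_solvable_or_singular_pivot.
case: (classic (c = qzero)) => [c0 | c_neq0].
  right; exists (qone, qzero); first by move=> /(congr1 fst); exact: qone_neq0.
  by rewrite /qlin a0 c0 /=; congr (_, _); qring.
(* swapping the two equations moves the nonzero entry c into pivot position *)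
case: t => t1 t2.
have [[x sol] | [x x0 ker]] := qlin_solvable_or_singular_pivot d a b (t2, t1) c_neq0.
- by left; exists x; move: sol; rewrite /qlin => /pair_equal_spec[-> ->].
- by right; exists x => //; move: ker; rewrite /qlin => /pair_equal_spec[-> ->].
Qed.

Lemma aff_ext (g h : aff) : aa g = aa h -> ab g = ab h -> ac g = ac h -> ad g = ad h ->
  ar g = ar h -> as_ g = as_ h -> g = h.
Proof. by case: g; case: h => /= ? ? ? ? ? ? ? ? ? ? ? ? -> -> -> -> -> ->. Qed.

Ltac aff_ring := apply: aff_ext; qring.

Lemma aff_mulA (g h k : aff) : aff_mul (aff_mul g h) k = aff_mul g (aff_mul h k).
Proof. aff_ring. Qed.

Lemma aff_mulg1 (g : aff) : aff_mul g aff1 = g.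
Proof. aff_ring. Qed.

Lemma aff_mul1g (g : aff) : aff_mul aff1 g = g.
Proof. aff_ring. Qed.

Lemma aff_act_mul (g h : aff) (p : quat * quat) :
  aff_act (aff_mul g h) p = aff_act g (aff_act h p).
Proof. by rewrite /aff_act /=; congr (_, _); qring. Qed.

Lemma aff_act1 (p : quat * quat) : aff_act aff1 p = p.
Proof. by case: p => x y; rewrite /aff_act /=; congr (_, _); qring. Qed.

Definition aff_lin (g : aff) : quat * quat -> quat * quat :=
  qlin (aa g) (ab g) (ac g) (ad g).

Lemma aff_lin_mul (g h : aff) (v : quat * quat) :
  aff_lin (aff_mul g h) v = aff_lin g (aff_lin h v).
Proof. by rewrite /aff_lin /qlin /=; congr (_, _); qring. Qed.

Lemma aff_lin1 (v : quat * quat) : aff_lin aff1 v = v.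
Proof. by case: v => x y; rewrite /aff_lin /qlin /=; congr (_, _); qring. Qed.

Lemma aff_lin_e1 (g : aff) : aff_lin g (qone, qzero) = (aa g, ac g).
Proof. by rewrite /aff_lin /qlin /=; congr (_, _); qring. Qed.

Lemma aff_lin_e2 (g : aff) : aff_lin g (qzero, qone) = (ab g, ad g).
Proof. by rewrite /aff_lin /qlin /=; congr (_, _); qring. Qed.

Lemma aff_fixed_point_or_lin_fixed_vector (g : aff) :
  (exists p, aff_act g p = p) \/
  (exists2 v, v <> (qzero, qzero) & aff_lin g v = v).
Proof.
have [[[x1 x2] sol] | [[x1 x2] x0 ker]] := qlin_solvable_or_singular
  (qsub (aa g) qone) (ab g) (ac g) (qsub (ad g) qone) (qopp (ar g), qopp (as_ g)).
- left; exists (x1, x2); case/pair_equal_spec: sol => e1 e2.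
  rewrite /aff_act /=; congr (_, _).
  + by apply: (eq_by_qsub e1); qring.
  + by apply: (eq_by_qsub e2); qring.
- right; exists (x1, x2) => //; case/pair_equal_spec: ker => e1 e2.
  rewrite /aff_lin /qlin /=; congr (_, _).
  + by apply: (eq_by_qsub e1); qring.
  + by apply: (eq_by_qsub e2); qring.
Qed.

Lemma triangular_fixed_point (g : aff) :
  ac g = qzero -> aa g <> qone -> ad g <> qone -> exists p, aff_act g p = p.
Proof.
move=> c0 a1 d1.
have [// | [[x1 x2] x0]] := aff_fixed_point_or_lin_fixed_vector g.
rewrite /aff_lin /qlin c0 /= => /pair_equal_spec[e1 e2].
have x2_0 : x2 = qzero.
  apply: (@qmulfI (qsub (ad g) qone)); first by move/qsub_eq0.
  by apply: (eq_by_qsub e2); qring.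
have x1_0 : x1 = qzero.
  apply: (@qmulfI (qsub (aa g) qone)); first by move/qsub_eq0.
  by apply: (eq_by_qsub e1); rewrite x2_0; qring.
by case: x0; rewrite x1_0 x2_0.
Qed.

Lemma free_triangular_diag1 (G : aff -> Prop) (h : aff) :
  acts_freely G -> G h -> ac h = qzero -> aa h = qone \/ ad h = qone.
Proof.
move=> free_G Gh c0; case: (classic (aa h = qone)) => [| a1]; [by left | right].
apply: NNPP => d1; have [p hp] := triangular_fixed_point c0 a1 d1.
by apply: a1; rewrite (free_G _ _ Gh hp).
Qed.

Definition aff_conj (P Q g : aff) : aff := aff_mul (aff_mul P g) Q.

Definition conj_set (P Q : aff) (G : aff -> Prop) : aff -> Prop :=
  fun k => exists2 g, G g & k = aff_conj P Q g.

Record abelian_free_action (G : aff -> Prop) : Prop := {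
  abelian_free_abelian : is_abelian G;
  abelian_free_free : acts_freely G;
  abelian_free_mul : forall g h, G g -> G h -> G (aff_mul g h);
  abelian_free_invertible : forall g, G g -> aff_invertible g }.

Section Conjugation.
Variables P Q : aff.
Hypotheses (PQ : aff_mul P Q = aff1) (QP : aff_mul Q P = aff1).

Lemma aff_conjM (g h : aff) :
  aff_conj P Q (aff_mul g h) = aff_mul (aff_conj P Q g) (aff_conj P Q h).
Proof. by rewrite /aff_conj !aff_mulA -(aff_mulA Q P) QP aff_mul1g. Qed.

Lemma abelian_free_action_conj (G : aff -> Prop) :
  abelian_free_action G -> abelian_free_action (conj_set P Q G).
Proof.
case=> ab_G free_G mul_G inv_G; split.
- by move=> _ _ [g Gg ->] [h Gh ->]; rewrite -!aff_conjM ab_G.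
- move=> _ p [g Gg ->] gp.
  have : aff_act g (aff_act Q p) = aff_act Q p.
    by rewrite -[in RHS]gp /aff_conj !aff_act_mul -(aff_act_mul Q P) QP aff_act1.
  by move/(free_G _ _ Gg) => ->; rewrite /aff_conj aff_mulg1.
- by move=> _ _ [g Gg ->] [h Gh ->]; rewrite -aff_conjM; exists (aff_mul g h); auto.
- move=> _ [g Gg ->]; have [k [gk kg]] := inv_G g Gg.
  by exists (aff_conj P Q k); rewrite -!aff_conjM gk kg /aff_conj aff_mulg1.
Qed.

Lemma conj_into_conj_set (G K : aff -> Prop) :
  conj_into (conj_set P Q G) K -> conj_into G K.
Proof.
case=> P' [Q' [PQ' [QP' into_K]]]; exists (aff_mul P' P), (aff_mul Q Q'); split; [|split].
- by rewrite !aff_mulA -(aff_mulA P) PQ aff_mul1g.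
- by rewrite !aff_mulA -(aff_mulA Q') QP' aff_mul1g.
- by move=> g Gg; have := into_K _ (ex_intro2 _ _ g Gg erefl); rewrite /aff_conj !aff_mulA.
Qed.

End Conjugation.

Lemma conj_into_sub (G K : aff -> Prop) : (forall g, G g -> K g) -> conj_into G K.
Proof.
move=> GK; exists aff1, aff1; rewrite aff_mulg1; do 2 split => //.
by move=> g Gg; rewrite aff_mul1g aff_mulg1; exact: GK.
Qed.

Lemma invertible_with_first_column (v : quat * quat) : v <> (qzero, qzero) ->
  exists P Q, [/\ aff_mul P Q = aff1, aff_mul Q P = aff1 & aff_lin Q (qone, qzero) = v].
Proof.
case: v => x1 x2 v0; case: (classic (x1 = qzero)) => [x1_0 | x1_neq0].
- have x2_neq0 : x2 <> qzero by move=> x2_0; apply: v0; rewrite x1_0 x2_0.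
  exists (Aff qzero (qinv x2) qone qzero qzero qzero), (Aff qzero qone x2 qzero qzero qzero).
  split; last by rewrite aff_lin_e1 x1_0.
    by apply: aff_ext; rewrite /aff_mul /= ?qmulVr //; qring.
  by apply: aff_ext; rewrite /aff_mul /= ?qmulrV //; qring.
- exists (Aff (qinv x1) qzero (qmul (qopp x2) (qinv x1)) qone qzero qzero),
         (Aff x1 qzero x2 qone qzero qzero).
  split; last by rewrite aff_lin_e1.
    by apply: aff_ext; rewrite /aff_mul /= ?qmulVr ?qmulrVK //; qring.
  by apply: aff_ext; rewrite /aff_mul /= ?qmulrV //; qring.
Qed.

Lemma aff_conj_triangular (g : aff) (v : quat * quat) :
  v <> (qzero, qzero) -> aff_lin g v = v ->
  exists P Q, [/\ aff_mul P Q = aff1, aff_mul Q P = aff1,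
    aa (aff_conj P Q g) = qone & ac (aff_conj P Q g) = qzero].
Proof.
move=> v0 gv; have [P [Q [PQ QP Qe1]]] := invertible_with_first_column v0.
have : aff_lin (aff_conj P Q g) (qone, qzero) = (qone, qzero).
  by rewrite !aff_lin_mul Qe1 gv -Qe1 -aff_lin_mul PQ aff_lin1.
by rewrite aff_lin_e1 => /pair_equal_spec[a1 c0]; exists P, Q.
Qed.

Definition is_translation (g : aff) : Prop := forall v, aff_lin g v = v.

Lemma is_translationP (g : aff) : is_translation g <->
  [/\ aa g = qone, ab g = qzero, ac g = qzero & ad g = qone].
Proof.
split=> [tr_g | [a1 b0 c0 d1] [x y]].
  move: (tr_g (qone, qzero)) (tr_g (qzero, qone)).
  by rewrite aff_lin_e1 aff_lin_e2 => /pair_equal_spec[-> ->] /pair_equal_spec[-> ->].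
by rewrite /aff_lin /qlin a1 b0 c0 d1 /=; congr (_, _); qring.
Qed.

Lemma is_translation_conj (P Q g : aff) : aff_mul Q P = aff1 ->
  is_translation (aff_conj P Q g) -> is_translation g.
Proof.
move=> QP tr v; have := congr1 (aff_lin Q) (tr (aff_lin P v)).
by rewrite /aff_conj !aff_lin_mul -!(aff_lin_mul Q P) QP !aff_lin1.
Qed.

Lemma typeII_of_commuting_shear (G : aff -> Prop) (g : aff) :
  is_abelian G -> acts_freely G -> G g ->
  aa g = qone -> ac g = qzero -> ad g = qone -> ab g <> qzero ->
  forall h, G h -> typeII h.
Proof.
case: g => a b c d r s ab_G free_G Gg /= a1 c0 d1 b0 h Gh.
have E := ab_G _ _ Gg Gh; rewrite a1 c0 d1 in E.
have hc0 : ac h = qzero.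
  by apply: (qmulfI b0); apply: (eq_by_qsub (congr1 (@aa R) E)); qring.
have comm_b : qmul b (ad h) = qmul (aa h) b.
  by apply: (eq_by_qsub (congr1 (@ab R) E)); qring.
have [ha1 | hd1] := free_triangular_diag1 free_G Gh hc0.
  split=> //; split=> //; apply: (qmulfI b0); rewrite comm_b ha1; qring.
split=> //; apply: (qmulIf b0); rewrite -comm_b hd1; qring.
Qed.

Lemma typeI_of_commuting_dilation (G : aff -> Prop) (g : aff) :
  abelian_free_action G -> G g ->
  aa g = qone -> ab g = qzero -> ac g = qzero -> ad g <> qone -> as_ g = qzero ->
  forall h, G h -> typeI h.
Proof.
case: g => a b c d r s [ab_G free_G mul_G inv_G] Gg /= a1 b0 c0 d1 s0 h Gh.
have E := ab_G _ _ Gg Gh; rewrite a1 b0 c0 s0 in E.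
have d1' : qsub d qone <> qzero by move/qsub_eq0.
have hb0 : ab h = qzero.
  by apply: (qmulIf d1'); apply: (eq_by_qsub (congr1 (@ab R) (esym E))); qring.
have hc0 : ac h = qzero.
  by apply: (qmulfI d1'); apply: (eq_by_qsub (congr1 (@ac R) E)); qring.
have hs0 : as_ h = qzero.
  by apply: (qmulfI d1'); apply: (eq_by_qsub (congr1 (@as_ R) E)); rewrite /= hc0; qring.
have ha1 : aa h = qone.
  have [// | hd1] := free_triangular_diag1 free_G Gh hc0.
  have gh_c0 : ac (aff_mul (Aff a b c d r s) h) = qzero by rewrite /= c0 hc0; qring.
  case: (free_triangular_diag1 free_G (mul_G _ _ Gg Gh) gh_c0) => /= gh1.
    by apply: (eq_by_qsub gh1); rewrite a1 b0; qring.
  by case: d1; apply: (eq_by_qsub gh1); rewrite c0 hd1; qring.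
have hd0 : ad h <> qzero.
  move=> hd0; have [k [hk _]] := inv_G _ Gh.
  move: (congr1 (@ad R) hk); rewrite /= hc0 hd0 => hk1.
  by apply: qone_neq0; rewrite -hk1; qring.
by [].
Qed.

Lemma triangular_conj_dilation (g : aff) :
  aa g = qone -> ac g = qzero -> ad g <> qone ->
  exists P Q r, [/\ aff_mul P Q = aff1, aff_mul Q P = aff1 &
    aff_conj P Q g = Aff qone qzero qzero (ad g) r qzero].
Proof.
case: g => a b c d r s /= -> -> d1.
have d1' : qsub d qone <> qzero by move/qsub_eq0.
set e := qinv (qsub d qone).
(* the shear (x, y) |-> (x - b e y, y + e s) removes b and moves the fixed point of
   y |-> d y + s to 0 *)
set P := Aff qone (qopp (qmul b e)) qzero qone qzero (qmul e s).
set Q := Aff qone (qmul b e) qzero qone (qmul (qopp (qmul b e)) (qmul e s)) (qopp (qmul e s)).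
exists P, Q, (ar (aff_conj P Q (Aff qone b qzero d r s))).
split; [rewrite /P /Q; aff_ring.. | apply: aff_ext; rewrite /aff_conj /= //; try qring].
- transitivity (qmul b (qsub qone (qmul e (qsub d qone)))); first qring.
  by rewrite qmulVr //; qring.
- transitivity (qmul (qsub qone (qmul (qsub d qone) e)) s); first qring.
  by rewrite qmulrV //; qring.
Qed.

Lemma conj_into_of_triangular (G : aff -> Prop) (g : aff) :
  abelian_free_action G -> G g -> aa g = qone -> ac g = qzero -> ~ is_translation g ->
  conj_into G (@typeI R) \/ conj_into G (@typeII R).
Proof.
move=> afG Gg a1 c0 not_tr; case: (classic (ad g = qone)) => [d1 | d1].
  have [ab_G free_G _ _] := afG.
  right; apply: conj_into_sub; apply: (typeII_of_commuting_shear ab_G free_G Gg) => // b0.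
  by apply: not_tr; apply/is_translationP.
left; have [P [Q [r [PQ QP gPQ]]]] := triangular_conj_dilation a1 c0 d1.
apply: (conj_into_conj_set PQ QP); apply: conj_into_sub.
apply: (typeI_of_commuting_dilation (g := Aff qone qzero qzero (ad g) r qzero)
  (abelian_free_action_conj PQ QP afG)) => //.
by rewrite -gPQ; exists g.
Qed.

End AffineQuaternionic.

Theorem mainTheorem11 (R : realType) (Gamma : aff R -> Prop) :
  is_subgroup Gamma -> is_abelian Gamma -> acts_freely Gamma ->
  conj_into Gamma (@typeI R) \/ conj_into Gamma (@typeII R).
Proof.
move=> [inv_G [_ [mul_G _]]] ab_G free_G.
have afG : abelian_free_action Gamma by split.
case: (classic (exists2 g, Gamma g & ~ is_translation g)) => [[g Gg not_tr] | all_tr].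
  have [[p gp] | [v v0 gv]] := aff_fixed_point_or_lin_fixed_vector g.
    by case: not_tr; rewrite (free_G _ _ Gg gp) => w; exact: aff_lin1.
  have [P [Q [PQ QP a1 c0]]] := aff_conj_triangular v0 gv.
  have Gg' : conj_set P Q Gamma (aff_conj P Q g) by exists g.
  have not_tr' : ~ is_translation (aff_conj P Q g) by move/(is_translation_conj QP).
  case: (conj_into_of_triangular (abelian_free_action_conj PQ QP afG) Gg' a1 c0 not_tr')
    => conj_G'; [left | right]; exact: (conj_into_conj_set PQ QP).
right; apply: conj_into_sub => h Gh.
have /is_translationP[a1 _ c0 d1] : is_translation h.
  by apply: NNPP => not_tr; apply: all_tr; exists h.
by [].
Qed.
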